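(* Let $f$ be an orientation-preserving homeomorphism of the circle $\mathbb T=\mathbb R/\mathbb Z$ whose rotation number $\rho(f)$ is rational. Assume $f$ is not topologically conjugate to a rotation. Then ${\rm h_{pol}}(f)=1$.
   Context: The rotation number of $f$ is the class in $\mathbb T$ of $\lim_{n\to\infty}F^n(x)/n$ for a lift $F:\mathbb R\to\mathbb R$ of $f$ (independent of $x$). Polynomial entropy: with $d_n^f(x,y)=\max_{0\le k\le n-1}d(f^k(x),f^k(y))$ for the standard metric $d$ on $\mathbb T$ and $G_n^f(\varepsilon)$ the minimal number of $d_n^f$-balls of radius $\varepsilon$ covering $\mathbb T$, ${\rm h_{pol}}(f)=\lim_{\varepsilon\to0}\limsup_{n\to\infty}\frac{\log G_n^f(\varepsilon)}{\log n}$. *)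

(* The circle T = R/Z is handled through lifts:
   a point of T is represented by any real number (modulo 1), and a
   homeomorphism of T by a lift R -> R. *)
From HB Require Import structures.
From mathcomp Require Import all_boot all_order all_algebra.
From mathcomp Require Import all_classical all_reals all_analysis.
Set Implicit Arguments. Unset Strict Implicit. Unset Printing Implicit Defensive.
Import Order.TTheory GRing.Theory Num.Theory.
Import numFieldNormedType.Exports.
Local Open Scope classical_set_scope.
Local Open Scope ring_scope.

Section Circle.
Variable R : realType.

Definition dT (x y : R) : R :=
  let t := x - y in
  let fr := t - (Num.floor t)%:~R in
  Num.min fr (1 - fr).

Definition circle_homeo_lift (H : R -> R) : Prop :=
  continuous H /\ injective H /\
  ((forall x, H (x + 1) = H x + 1) \/ (forall x, H (x + 1) = H x - 1)).

Definition orient_pres_homeo_lift (F : R -> R) : Prop :=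
  continuous F /\ {homo F : x y / x < y} /\ (forall x, F (x + 1) = F x + 1).

Definition conj_to_rotation (F : R -> R) : Prop :=
  exists (H : R -> R) (alpha : R), circle_homeo_lift H /\
    forall x, exists k : int, H (F x) = H x + alpha + k%:~R.

Definition rational_rotation_number (F : R -> R) : Prop :=
  exists r : rat, (fun n : nat => iter n F 0 / n%:R) @ \oo --> (ratr r : R).

Definition dBowen (F : R -> R) (n : nat) (x y : R) : R :=
  \big[Num.max/0]_(k < n) dT (iter k F x) (iter k F y).

Definition covers (F : R -> R) (n : nat) (eps : R) (m : nat) : Prop :=
  exists c : 'I_m -> R, forall x : R, exists i : 'I_m, dBowen F n x (c i) < eps.

Definition Gcover (F : R -> R) (n : nat) (eps : R) : R :=
  inf [set (m%:R : R) | m in covers F n eps].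

Definition hpol_eps (F : R -> R) (eps : R) : \bar R :=
  limn_esup (fun n : nat => (ln (Gcover F n eps) / ln (n%:R))%:E).

End Circle.

From HB Require Import structures.
From mathcomp Require Import all_boot all_order all_algebra.
From mathcomp Require Import all_classical all_reals all_analysis.
From mathcomp Require Import ring lra zify.
Set Implicit Arguments. Unset Strict Implicit. Unset Printing Implicit Defensive.
Import Order.TTheory GRing.Theory Num.Theory.
Import numFieldNormedType.Exports.
Local Open Scope classical_set_scope.
Local Open Scope ring_scope.

(* Write rho(f) = p/q and g := F^q - p, a lift of f^q with rotation number 0.
   If g fixed every point, the average (1/q) sum_{i<q} F^i would conjugate f to
   the rotation by p/q; so some z0 is moved by g.  Zero rotation number keeps
   the monotone g-orbit of z0 within 1 of z0, so it converges to a fixed point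
   and all g^m(z0), m > 0, stay at circle distance >= 2e from z0.  Hence the g^j-preimages of z0,
   j <= n/q, lie in distinct d_n-balls of radius eps <= e: G_n(eps) >= n/q.
   Conversely the itineraries through the intervals [j/M, (j+1)/M) give a
   cover by nM + 1 balls, so log G_n(eps) / log n -> 1 for every small eps. *)

Section CircleDistance.
Variable R : realType.
Implicit Types (x y z : R).

Lemma dT_le_dist_int x y (k : int) : dT x y <= `|x - y - k%:~R|.
Proof.
rewrite /dT; set t := x - y; set fl := Num.floor t.
have /andP[fl_le fl_gt] := floor_itv t; rewrite -/fl intrD in fl_le fl_gt.
case: (lerP k fl) => hk.
  have hk' : (k%:~R : R) <= fl%:~R by rewrite ler_int.
  by rewrite ge_min ger0_norm ?lexx //; lra.
have hk' : (fl%:~R : R) + 1 <= k%:~R by rewrite -[1]/(1%:~R) -intrD ler_int lezD1.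
rewrite ge_min ltr0_norm; last lra.
by apply/orP; right; lra.
Qed.

Lemma dT_attained x y : exists k : int, dT x y = `|x - y - k%:~R|.
Proof.
rewrite /dT; set t := x - y; set fl := Num.floor t.
have /andP[fl_le fl_gt] := floor_itv t; rewrite -/fl intrD in fl_le fl_gt.
rewrite /Order.min; case: ifPn => _.
  by exists fl; rewrite ger0_norm //; lra.
by exists (fl + 1); rewrite intrD ltr0_norm; lra.
Qed.

Lemma dT_le_of_dist x y x' y' :
  (forall k : int, exists l : int, `|x' - y' - l%:~R| = `|x - y - k%:~R|) ->
  dT x' y' <= dT x y.
Proof.
by have [k ->] := dT_attained x y => /(_ k) [l <-]; apply: dT_le_dist_int.
Qed.

Lemma dT_le_dist x y : dT x y <= `|x - y|.
Proof. by have := dT_le_dist_int x y 0; rewrite subr0. Qed.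

Lemma dT_triangle x y z : dT x z <= dT x y + dT y z.
Proof.
have [k1 ->] := dT_attained x y; have [k2 ->] := dT_attained y z.
apply: le_trans (dT_le_dist_int x z (k1 + k2)) _.
by rewrite (_ : x - z - _ = (x - y - k1%:~R) + (y - z - k2%:~R)) ?ler_normD // intrD; ring.
Qed.

Lemma dT_opp x y : dT (- x) (- y) = dT x y.
Proof.
by apply/le_anti/andP; split; apply: dT_le_of_dist => k; exists (- k);
  rewrite -normrN mulrNz; congr `|_|; ring.
Qed.

Lemma dT_sym x y : dT x y = dT y x.
Proof.
by apply/le_anti/andP; split; apply: dT_le_of_dist => k; exists (- k);
  rewrite -normrN mulrNz; congr `|_|; ring.
Qed.

Lemma dT_addl_int x y (k : int) : dT (x + k%:~R) y = dT x y.
Proof.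
apply/le_anti/andP; split; apply: dT_le_of_dist => l.
  by exists (k + l); rewrite intrD; congr `|_|; ring.
by exists (l - k); rewrite intrB; congr `|_|; ring.
Qed.

Lemma dT_addr_int x y (k : int) : dT x (y + k%:~R) = dT x y.
Proof. by rewrite dT_sym dT_addl_int dT_sym. Qed.

Lemma dT_ge_of_gap x y e : 0 <= e -> 2 * e <= x - y <= 1 - 2 * e -> 2 * e <= dT x y.
Proof.
move=> he /andP[gap_lo gap_hi]; have [k ->] := dT_attained x y.
case: (lerP k 0) => hk.
  have hk' : (k%:~R : R) <= 0 by rewrite (_ : 0 = 0%:~R) // ler_int.
  by rewrite ger0_norm; lra.
have hk' : (1 : R) <= k%:~R by rewrite (_ : 1 = 1%:~R) // ler_int.
by rewrite ler0_norm; lra.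
Qed.

End CircleDistance.

Section Lifts.
Variable R : realType.
Implicit Types (G : R -> R) (x y w : R).
Local Notation lift := (@orient_pres_homeo_lift R).

Lemma lift_le G x y : lift G -> x <= y -> G x <= G y.
Proof.
move=> [_ [G_mono _]]; rewrite le_eqVlt => /orP[/eqP->//|/G_mono/ltW//].
Qed.

Lemma lift_addn G x (n : nat) : lift G -> G (x + n%:R) = G x + n%:R.
Proof.
move=> [_ [_ G_per]]; elim: n => [|n IH]; first by rewrite !addr0.
by rewrite -natr1 addrA G_per IH addrA.
Qed.

Lemma lift_addz G x (k : int) : lift G -> G (x + k%:~R) = G x + k%:~R.
Proof.
move=> hG; case: k => n; first exact: lift_addn.
rewrite NegzE mulrNz.
by have := lift_addn (x - n.+1%:R) n.+1 hG; rewrite subrK => ->; rewrite addrK.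
Qed.

Lemma lift_iter G n : lift G -> lift (iter n G).
Proof.
move=> hG; have [G_cont [G_mono G_per]] := hG.
elim: n => [|n [IHc [IHm IHp]]]; first by split; [move=> x; apply: cvg_id|split].
split; [|split].
- by move=> x; apply: continuous_comp; [apply: IHc|apply: G_cont].
- by move=> x y /IHm /G_mono.
- by move=> x /=; rewrite IHp G_per.
Qed.

Lemma lift_subz G (p : int) : lift G -> lift (fun x => G x - p%:~R).
Proof.
move=> [G_cont [G_mono G_per]]; split; [|split].
- by move=> x; apply: continuousB; [apply: G_cont|apply: cst_continuous].
- by move=> x y /G_mono; rewrite ltrD2r.
- by move=> x; rewrite G_per addrAC.
Qed.

Lemma lift_oppconj G : lift G -> lift (fun x => - G (- x)).
Proof.
move=> hG; have [G_cont [G_mono _]] := hG; split; [|split].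
- move=> x; apply: continuousN.
  by apply: (@continuous_comp _ _ _ -%R G); [apply: oppr_continuous|apply: G_cont].
- by move=> x y xy; rewrite ltrN2; apply: G_mono; rewrite ltrN2.
- move=> x; rewrite opprD (_ : -1 = (-1)%:~R) // lift_addz //.
  by rewrite opprD opprK.
Qed.

Lemma lift_surj G w : lift G -> exists x, G x = w.
Proof.
move=> hG; have [G_cont _] := hG.
set N : nat := (Num.truncn `|G w - w|).+1.
have hN : `|G w - w| < N%:R by apply: truncnS_gt.
have G_lo : G (w - N%:R) = G w - N%:R.
  by have := lift_addn (w - N%:R) N hG; rewrite subrK => ->; rewrite addrK.
have [c _ <-] : exists2 c, c \in `[w - N%:R, w + N%:R] & G c = w.
  have N_ge0 : (0 : R) <= N%:R by [].
  apply: IVT; [lra|exact: continuous_subspaceT|].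
  rewrite G_lo lift_addn //; move: hN; rewrite ltr_norml => /andP[? ?].
  by rewrite ge_min le_max; apply/andP; split; apply/orP; [left|right]; lra.
by exists c.
Qed.

End Lifts.

Section Covering.
Variable R : realType.
Implicit Types (F : R -> R) (n m : nat) (eps : R).

Lemma Gcover_le F n eps m : covers F n eps m -> Gcover F n eps <= m%:R.
Proof.
by move=> cov; apply: ge_inf; [exists 0 => _ [k _ <-]|exists m].
Qed.

Lemma Gcover_ge F n eps m (b : R) : covers F n eps m ->
  (forall k, covers F n eps k -> b <= k%:R) -> b <= Gcover F n eps.
Proof.
by move=> cov lb; apply: lb_le_inf; [exists m%:R, m|move=> _ [k /lb ? <-]].
Qed.

End Covering.

Lemma dist_lt_of_floor_eq (R : realType) (M : nat) (eps a b : R) :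
  (0 < M)%N -> M%:R^-1 < eps ->
  Num.floor (M%:R * a) = Num.floor (M%:R * b) -> `|a - b| < eps.
Proof.
move=> M_gt0 M_eps eq_floor.
have /andP[a_lo a_hi] := floor_itv (M%:R * a).
have /andP[b_lo b_hi] := floor_itv (M%:R * b).
rewrite eq_floor intrD in a_lo a_hi; rewrite intrD in b_hi.
have M_gt0' : (0 : R) < M%:R by rewrite ltr0n.
have : `|a - b| * M%:R < 1.
  by rewrite -normr_nat -normrM mulrBl ltr_norml; apply/andP; split; lra.
rewrite -ltr_pdivlMr // mul1r => /lt_trans; exact.
Qed.

Section UpperBound.
Variable R : realType.
Variables (F : R -> R) (n M : nat) (eps : R).
Hypotheses (hF : orient_pres_homeo_lift F) (M_gt0 : (0 < M)%N) (M_eps : M%:R^-1 < eps).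

(* Points with the same itinerary through the cells [j/M, (j+1)/M) stay eps-close
   for n steps; on [0, 1) the itinerary is monotone, so its sum takes at most
   n M + 1 values and determines it. *)
Let cell (k : nat) (x : R) : int := Num.floor (M%:R * iter k F x).
Let code (x : R) : int := \sum_(k < n) cell k x.

Let cell_le k x y : x <= y -> cell k x <= cell k y.
Proof. by move=> xy; apply/le_floor/ler_wpM2l/lift_le/xy/lift_iter. Qed.

Let cell_add1 k x : cell k (x + 1) = cell k x + M%:Z.
Proof.
rewrite /cell (lift_addn x 1 (lift_iter k hF)) mulrDr mulr1.
by rewrite floorDrz ?natr_int // -[(M%:R : R)]/((M%:Z)%:~R) intrKfloor.
Qed.

Let cell_eq_of_code_eq x y k : x <= y -> code x = code y -> (k < n)%N ->
  cell k x = cell k y.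
Proof.
move=> xy code_eq k_lt.
have cell_sub_ge0 (i : 'I_n) : predT i -> 0 <= cell i y - cell i x.
  by rewrite subr_ge0 cell_le.
have /(psumr_eq0P cell_sub_ge0)/(_ (Ordinal k_lt) isT)/eqP :
    \sum_(i < n) (cell i y - cell i x) = 0.
  by rewrite sumrB -/(code y) -/(code x) code_eq subrr.
by rewrite subr_eq0 => /eqP.
Qed.

Let code_range x : 0 <= x < 1 -> code 0 <= code x <= code 0 + (n * M)%:Z.
Proof.
move=> /andP[x_ge0 x_lt1]; apply/andP; split.
  by apply: ler_sum => k _; apply: cell_le.
apply: (@le_trans _ _ (\sum_(k < n) (cell k 0 + M%:Z))).
  by apply: ler_sum => k _; rewrite -cell_add1 add0r; apply/cell_le/ltW.
by rewrite big_split /= sumr_const card_ord -/(code 0); lia.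
Qed.

Lemma covers_upper : covers F n eps (n * M + 1).
Proof.
pose P (i : nat) := [set y : R | 0 <= y < 1 /\ code y = code 0 + i%:Z].
exists (fun i : 'I_(n * M + 1) => xget 0 (P i)) => x.
pose x' := x - (Num.floor x)%:~R.
have x'_itv : 0 <= x' < 1.
  by have := floor_itv x; rewrite /x' intrD => /andP[? ?]; apply/andP; split; lra.
have /andP[code_lo code_hi] := code_range x'_itv.
have i_lt : (`|code x' - code 0| < n * M + 1)%N by lia.
exists (Ordinal i_lt) => /=; set y := xget 0 _.
have [/andP[y_ge0 y_lt1] code_y] : P `|code x' - code 0|%N y.
  apply: xgetPex; exists x'; split=> //.
  by rewrite gez0_abs ?subr_ge0 //; lia.
rewrite gez0_abs ?subr_ge0 // in code_y.
have {}code_y : code x' = code y by lia.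
apply: bigmax_lt => [|k _]; first by apply: lt_trans M_eps; rewrite invr_gt0 ltr0n.
rewrite -[x](subrK (Num.floor x)%:~R) (lift_addz _ _ (lift_iter k hF)) dT_addl_int.
apply/(le_lt_trans (dT_le_dist _ _))/(dist_lt_of_floor_eq M_gt0 M_eps).
by case: (lerP x' y) => xy; [|symmetry]; apply: cell_eq_of_code_eq => //; apply: ltW.
Qed.

End UpperBound.

Section ZeroRotation.
Variable R : realType.
Variable G : R -> R.
Hypothesis hG : orient_pres_homeo_lift G.

Lemma iter_mul_ge k z0 : z0 + 1 <= iter k G z0 ->
  forall j : nat, j%:R - 1 <= iter (j * k) G 0.
Proof.
move=> z0_k j.
have orbit_ge : z0 + j%:R <= iter (j * k) G z0.
  elim: j => [|j IH]; first by rewrite mul0n addr0.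
  rewrite mulSn iterD; apply: le_trans (lift_le (lift_iter k hG) IH).
  by rewrite (lift_addn _ _ (lift_iter k hG)) -natr1; lra.
have /andP[fl_le fl_gt] := floor_itv z0.
have := lift_le (lift_iter (j * k) hG) (ltW fl_gt).
have := lift_addz 0 (Num.floor z0 + 1) (lift_iter (j * k) hG).
by rewrite add0r => ->; rewrite intrD in fl_le fl_gt *; lra.
Qed.

Hypothesis rot0 : (fun m => iter m G 0 / m%:R) @ \oo --> 0.

Lemma iter_lt_add1 m z0 : iter m G z0 < z0 + 1.
Proof.
case: m => [|k]; first by rewrite /= ltrDl.
rewrite ltNge; apply/negP => /iter_mul_ge orbit_ge.
have e_gt0 : (0 : R) < (2 * k.+1%:R)^-1 by rewrite invr_gt0 mulr_gt0.
have /cvgrPdist_lt/(_ _ e_gt0) [N _ hN] := rot0.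
have /hN : (N <= N.+2 * k.+1)%N by nia.
rewrite sub0r normrN => /(le_lt_trans (ler_norm _)).
rewrite ltr_pdivrMr ?ltr0n ?muln_gt0 //.
have -> : (2 * k.+1%:R)^-1 * (N.+2 * k.+1)%:R = N.+2%:R / 2 :> R.
  by rewrite natrM; field; rewrite lt0r_neq0 ?ltr0n.
have := orbit_ge N.+2; have : (2 : R) <= N.+2%:R by rewrite ler_nat.
lra.
Qed.

Lemma orbit_sep_of_lt z0 : z0 < G z0 ->
  exists2 e : R, 0 < e & forall m, (0 < m)%N -> 2 * e <= dT (iter m G z0) z0.
Proof.
move=> z0_lt.
pose a m := iter m G z0.
have a_homo : {homo a : m m' / (m <= m')%N >-> m <= m'}.
  apply/nondecreasing_seqP; elim=> [|m IH]; first exact: ltW.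
  exact: lift_le hG IH.
have a_ub : has_ubound (range a) by exists (z0 + 1) => _ [m _ <-]; apply/ltW/iter_lt_add1.
have a_cvg := nondecreasing_cvgn a_homo a_ub; set L := sup (range a) in a_cvg.
have a_le m : a m <= L by apply: ub_le_sup => //; exists m.
have L_le : L <= z0 + 1.
  by apply: ge_sup; [exists (a 0), 0|move=> _ [m _ <-]; apply/ltW/iter_lt_add1].
have G_L : G L = L.
  have a_shift_cvg : (fun m => a m.+1) @ \oo --> L by rewrite (cvg_shiftS a).
  have [G_cont _] := hG.
  exact: cvg_unique _ (cvg_comp _ _ a_cvg (G_cont L)) a_shift_cvg.
have L_lt : L < z0 + 1.
  rewrite lt_neqAle L_le andbT; apply/eqP => L_eq.
  by move: G_L; rewrite L_eq; have [_ [_ ->]] := hG; lra.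
pose e := Num.min (G z0 - z0) (z0 + 1 - L) / 2.
have e1 : 2 * e <= G z0 - z0 by rewrite /e mulrC divfK // ge_min lexx.
have e2 : 2 * e <= z0 + 1 - L by rewrite /e mulrC divfK // ge_min lexx orbT.
have e_gt0 : 0 < e by rewrite /e divr_gt0 // lt_min; apply/andP; split; lra.
exists e => // m m_gt0; apply: dT_ge_of_gap; first exact: ltW.
have := a_le m; have := a_homo 1%N m m_gt0; rewrite /a /= => ? ?.
by apply/andP; split; lra.
Qed.

End ZeroRotation.

Lemma iter_oppconj (R : realType) (G : R -> R) m x :
  iter m (fun y => - G (- y)) x = - iter m G (- x).
Proof. by elim: m x => [|m IH] x /=; rewrite ?opprK // IH opprK. Qed.

Lemma orbit_sep (R : realType) (G : R -> R) (z0 : R) : orient_pres_homeo_lift G ->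
  (fun m => iter m G 0 / m%:R) @ \oo --> 0 -> G z0 != z0 ->
  exists2 e : R, 0 < e & forall m, (0 < m)%N -> 2 * e <= dT (iter m G z0) z0.
Proof.
move=> hG rot0; rewrite neq_lt => /orP[G_lt|]; last exact: orbit_sep_of_lt.
have rot0' : (fun m => iter m (fun y => - G (- y)) 0 / m%:R) @ \oo --> 0.
  have -> : (fun m => iter m (fun y => - G (- y)) 0 / m%:R) =
            (fun m => - (iter m G 0 / m%:R)).
    by apply/funext => m; rewrite iter_oppconj oppr0 mulNr.
  by have := cvgN rot0; rewrite oppr0; apply.
have [|e e_gt0 sep] := orbit_sep_of_lt (lift_oppconj hG) rot0' (z0 := - z0).
  by rewrite opprK ltrN2.
by exists e => // m /sep; rewrite iter_oppconj opprK dT_opp.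
Qed.

Section LowerBound.
Variable R : realType.
Variables (F : R -> R) (q : nat) (p : int).
Hypotheses (hF : orient_pres_homeo_lift F) (q_gt0 : (0 < q)%N).
Let g (x : R) := iter q F x - p%:~R.

Lemma iter_mul_sub_int m x : iter (m * q) F x = iter m g x + (p * m%:Z)%:~R.
Proof.
elim: m x => [|m IH] x; first by rewrite mul0n /= mulr0 addr0.
rewrite mulSn iterD IH (lift_addz _ _ (lift_iter q hF)) /= /g.
by rewrite !intrM -addn1 PoszD intrD; ring.
Qed.

Variables (z0 e eps : R) (n : nat).
Hypotheses (n_gt0 : (0 < n)%N) (eps_le : eps <= e)
  (sep : forall d, (0 < d)%N -> 2 * e <= dT (iter d g z0) z0).

(* Preimages of z0 under g^j1 and g^j2 with j1 < j2 are at distance >= 2e at time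
   j2 q, so no eps-ball of d_n can contain both once j2 q < n. *)
Let return_times_apart (y : nat -> R) (c : R) (j1 j2 : nat) :
  (forall j, iter j g (y j) = z0) -> (j1 < j2)%N -> (j2 * q < n)%N ->
  dBowen F n (y j1) c < eps -> dBowen F n (y j2) c < eps -> False.
Proof.
move=> y_ret j_lt j2_lt ball1 ball2.
have at_j2 (x : R) : dBowen F n x c < eps -> dT (iter (j2 * q) F x) (iter (j2 * q) F c) < eps.
  apply: le_lt_trans.
  exact: (le_bigmax _ (fun k : 'I_n => dT (iter k F x) (iter k F c)) (Ordinal j2_lt)).
have {ball1 ball2} := (at_j2 _ ball1, at_j2 _ ball2).
have y1_at_j2 : iter j2 g (y j1) = iter (j2 - j1) g z0.
  by rewrite -(y_ret j1) -iterD subnK // ltnW.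
rewrite !iter_mul_sub_int y_ret y1_at_j2.
rewrite !dT_addr_int !dT_addl_int => -[d1 d2].
have := dT_triangle (iter (j2 - j1) g z0) (iter j2 g c) z0.
rewrite (dT_sym (iter j2 g c)).
by have := @sep (j2 - j1)%N; rewrite subn_gt0 => /(_ j_lt); move: d1 d2 eps_le; lra.
Qed.

Lemma covers_lower m : covers F n eps m -> (((n.-1) %/ q).+1 <= m)%N.
Proof.
move=> [c c_cov]; set K := (n.-1 %/ q)%N.
pose y (j : nat) := xget 0 [set y | iter j g y = z0].
have y_ret j : iter j g (y j) = z0.
  by apply: (xgetPex 0 (lift_surj _ (lift_iter j (lift_subz p (lift_iter q hF))))).
have [idx idx_ball] := choice (fun j : 'I_K.+1 => c_cov (y j)).
suff /leq_card : injective idx by rewrite !card_ord.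
have jq_lt (j : 'I_K.+1) : (j * q < n)%N.
  by have := ltn_ord j; rewrite ltnS leq_divRL // => /leq_ltn_trans; apply; rewrite ltn_predL.
move=> j1 j2 idx_eq; apply: val_inj; case: (ltngtP j1 j2) => // j_lt; exfalso.
  by apply: (return_times_apart y_ret j_lt (jq_lt j2) (idx_ball j1)); rewrite idx_eq.
by apply: (return_times_apart y_ret j_lt (jq_lt j1) (idx_ball j2)); rewrite -idx_eq.
Qed.

End LowerBound.

Section PeriodicConjugacy.
Variable R : realType.
Variable F : R -> R.
Hypothesis hF : orient_pres_homeo_lift F.

Lemma continuous_sum_iter q : continuous (fun x => \sum_(i < q) iter i F x).
Proof.
elim: q => [|q IH].
  have -> : (fun x => \sum_(i < 0) iter i F x) = fun=> 0.
    by apply/funext => x; rewrite big_ord0.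
  by move=> x; apply: cst_continuous.
have -> : (fun x => \sum_(i < q.+1) iter i F x) =
          (fun x => \sum_(i < q) iter i F x) + iter q F.
  by apply/funext => x; rewrite big_ord_recr.
have [iter_cont _] := lift_iter q hF.
by move=> x; apply: continuousD; [apply: IH|apply: iter_cont].
Qed.

Lemma sum_iter_lt q x y : (0 < q)%N -> x < y ->
  \sum_(i < q) iter i F x < \sum_(i < q) iter i F y.
Proof.
case: q => // q _ xy; rewrite !big_ord_recl /=.
by apply: ltr_leD => //; apply: ler_sum => i _; apply/(lift_le (lift_iter i.+1 hF))/ltW.
Qed.

(* If F^q = T_p then h = (1/q) sum_{i<q} F^i conjugates F to the rotation by p/q. *)
Lemma conj_of_periodic q (p : int) : (0 < q)%N ->
  (forall x, iter q F x - p%:~R = x) -> conj_to_rotation F.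
Proof.
move=> q_gt0 periodic.
pose S x := \sum_(i < q) iter i F x.
have q_neq0 : q%:R != 0 :> R by rewrite pnatr_eq0 -lt0n.
exists (fun x => S x / q%:R), (p%:~R / q%:R); split; [split; [|split]|].
- by move=> x; apply: continuousM; [apply: continuous_sum_iter|apply: cst_continuous].
- move=> x y /(congr1 ( *%R^~ q%:R)) /=; rewrite !divfK // => S_eq.
  by case: (ltgtP x y) => // xy; have := sum_iter_lt q_gt0 xy; rewrite -/(S x) -/(S y) S_eq ltxx.
- left => x; rewrite /S (eq_bigr (fun i : 'I_q => iter i F x + 1)); last first.
    by move=> i _; apply: (lift_addn x 1 (lift_iter i hF)).
  by rewrite big_split /= sumr_const card_ord mulrDl divff.
- move=> x; exists 0; rewrite addr0 -mulrDl; congr (_ / _).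
  have := periodic x; have : \sum_(i < q.+1) iter i F x = S x + iter q F x.
    by rewrite big_ord_recr.
  rewrite big_ord_recl /= (eq_bigr (fun i : 'I_q => iter i F (F x))) -/(S (F x)).
    by lra.
  by move=> i _; rewrite add0n -iterS iterSr.
Qed.

End PeriodicConjugacy.

Lemma ln_ratio_cvg1 (R : realType) (G : nat -> R) (a b : R) : 0 < a -> 0 < b ->
  (forall n, (1 <= n)%N -> n%:R * a <= G n <= n%:R * b) ->
  (fun n => ln (G n) / ln n%:R) @ \oo --> (1 : R).
Proof.
move=> a_gt0 b_gt0 G_bnd; apply/cvgrPdist_lt => e e_gt0.
pose C := `|ln a| + `|ln b|.
near=> n.
have n_ge2 : (2 <= n)%N by near: n; exact: nbhs_infty_ge.
have n_big : expR (C / e) < n%:R by near: n; exact: nbhs_infty_gtr.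
have n_gt0 : (0 : R) < n%:R by rewrite ltr0n; apply: leq_trans n_ge2.
have ln_gt0 : 0 < ln (n%:R : R) by apply: ln_gt0; rewrite ltr1n.
have C_lt : C < e * ln (n%:R : R).
  rewrite -(ltr_ln (expR_gt0 _)) ?posrE // expRK ltr_pdivrMr // in n_big.
  by rewrite mulrC.
have /andP[G_lo G_hi] := G_bnd n (ltnW n_ge2).
have na_gt0 : 0 < n%:R * a by rewrite mulr_gt0.
have G_gt0 := lt_le_trans na_gt0 G_lo.
rewrite -ler_ln ?posrE // lnM ?posrE // in G_lo.
rewrite -ler_ln ?posrE ?mulr_gt0 // lnM ?posrE // in G_hi.
have -> : 1 - ln (G n) / ln n%:R = (ln (n%:R : R) - ln (G n)) / ln n%:R.
  by field; rewrite lt0r_neq0.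
rewrite normrM normfV (gtr0_norm ln_gt0) ltr_pdivrMr // ltr_norml.
have /andP[? ?] : - `|ln a| <= ln a <= `|ln a| by rewrite -ler_norml.
have /andP[? ?] : - `|ln b| <= ln b <= `|ln b| by rewrite -ler_norml.
by rewrite /C in C_lt; apply/andP; split; lra.
Unshelve. all: by end_near.
Qed.

Lemma limn_esup_ln_ratio (R : realType) (G : nat -> R) (a b : R) : 0 < a -> 0 < b ->
  (forall n, (1 <= n)%N -> n%:R * a <= G n <= n%:R * b) ->
  limn_esup (fun n => (ln (G n) / ln n%:R)%:E) = 1%:E.
Proof.
move=> a_gt0 b_gt0 /(ln_ratio_cvg1 a_gt0 b_gt0) ratio_cvg.
have {}ratio_cvg : (fun n => (ln (G n) / ln n%:R)%:E) @ \oo --> 1%:E.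
  by apply: cvg_EFin; [near=> n|].
by rewrite is_cvg_limn_esupE ?(cvgP _ ratio_cvg) // (cvg_lim _ ratio_cvg).
Unshelve. all: by end_near.
Qed.

Lemma rotation_sub_cvg0 (R : realType) (F : R -> R) (q : nat) (p : int) :
  orient_pres_homeo_lift F -> (0 < q)%N ->
  (fun n => iter n F 0 / n%:R) @ \oo --> (p%:~R / q%:R : R) ->
  (fun m => iter m (fun x => iter q F x - p%:~R) 0 / m%:R) @ \oo --> 0.
Proof.
move=> hF q_gt0 rot; apply/cvgrPdist_lt => e e_gt0.
have q_gt0' : (0 : R) < q%:R by rewrite ltr0n.
have /cvgrPdist_lt/(_ (e / q%:R)) [|N _ hN] := rot; first by rewrite divr_gt0.
exists N.+1 => // m /= N_lt; rewrite sub0r normrN.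
have m_gt0 : (0 : R) < m%:R by rewrite ltr0n; apply: leq_trans N_lt.
have /hN : (N <= m * q)%N by apply: leq_trans (ltnW N_lt) (leq_pmulr _ q_gt0).
rewrite /= (@iter_mul_sub_int _ _ q p hF) ltr_pdivlMr // => close.
set y := iter m _ 0 in close *.
have -> : y / m%:R = - (q%:R * (p%:~R / q%:R - (y + (p * m%:Z)%:~R) / (m * q)%:R)).
  by rewrite natrM intrM; field; rewrite !lt0r_neq0.
by rewrite normrN normrM gtr0_norm // mulrC.
Qed.

Lemma hpol_eps_eq1 (R : realType) (F : R -> R) (q : nat) (p : int) (z0 e eps : R) :
  orient_pres_homeo_lift F -> (0 < q)%N -> 0 < eps -> eps <= e ->
  (forall d, (0 < d)%N -> 2 * e <= dT (iter d (fun x => iter q F x - p%:~R) z0) z0) ->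
  hpol_eps F eps = 1%:E.
Proof.
move=> hF q_gt0 eps_gt0 eps_le sep.
pose M := (Num.truncn eps^-1).+1.
have M_eps : M%:R^-1 < eps.
  by rewrite -(invrK eps) ltf_pV2 ?posrE ?invr_gt0 ?ltr0n //; apply: truncnS_gt.
apply: (limn_esup_ln_ratio (a := q%:R^-1) (b := (M + 1)%:R)) => [||n n_gt0].
- by rewrite invr_gt0 ltr0n.
- by rewrite ltr0n addn1.
have cov := covers_upper n hF (ltn0Sn _) M_eps.
apply/andP; split.
  apply: Gcover_ge cov _ => k /(covers_lower hF q_gt0 n_gt0 eps_le sep).
  set K := (n.-1 %/ q)%N => K_le.
  have n_le : (n <= K.+1 * q)%N by have := ltn_ceil n.-1 q_gt0; rewrite prednK.
  rewrite ler_pdivrMr ?ltr0n //; apply: (@le_trans _ _ (K.+1 * q)%:R).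
    by rewrite ler_nat.
  by rewrite natrM ler_pM2r ?ltr0n // ler_nat.
apply: le_trans (Gcover_le cov) _.
by rewrite -natrM ler_nat mulnDr muln1 leq_add2l.
Qed.

Theorem proposition3p1 (R : realType) (F : R -> R) :
  orient_pres_homeo_lift F ->
  rational_rotation_number F ->
  ~ conj_to_rotation F ->
  hpol_eps F eps @[eps --> 0^'+] --> 1%:E.
Proof.
move=> hF [r rot] not_conj.
set q := `|denq r|%N; set p := numq r; pose g x := iter q F x - p%:~R.
have q_gt0 : (0 < q)%N by rewrite absz_gt0 denq_neq0.
have {}rot : (fun n => iter n F 0 / n%:R) @ \oo --> (p%:~R / q%:R : R).
  by rewrite (_ : p%:~R / q%:R = ratr r :> R) // /ratr /q pmulrn absz_denq.
have /existsNP [z0 /eqP g_z0] : ~ forall x, g x = x.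
  by move=> g_id; apply/not_conj/(conj_of_periodic hF q_gt0 g_id).
have [e e_gt0 sep] := orbit_sep (lift_subz p (lift_iter q hF))
  (rotation_sub_cvg0 hF q_gt0 rot) g_z0.
apply: cvg_near_cst; near=> eps; apply: (hpol_eps_eq1 hF q_gt0 _ _ sep).
  by near: eps; exact: nbhs_right_gt.
by near: eps; exact: nbhs_right_ltW.
Unshelve. all: by end_near.
Qed.
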